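(* Fix a positive integer $k$ and a permutation $\rho$. Then $\lim_{n\to\infty}\left(\operatorname{op}^*_{n,k}(\rho)\right)^{1/n}$ exists and is a real number in $[1,\infty)$.
   Context: For a permutation $\rho=\rho_1\cdots\rho_m\in\mathcal{S}_m$ and a sequence of pairwise disjoint (possibly empty) sets $B_1/B_2/\cdots/B_k$, we say it contains $\rho$ if there are indices $i_1<i_2<\cdots<i_m$ and elements $b_j\in B_{i_j}$ such that $b_1\cdots b_m$ is order-isomorphic to $\rho$ (i.e. $b_a<b_c$ iff $\rho_a<\rho_c$); otherwise it avoids $\rho$. $\operatorname{op}^*_{n,k}(\rho)$ is the number of sequences $B_1/\cdots/B_k$ of pairwise disjoint subsets of $[n]$ (blocks are allowed to be empty; order of blocks matters, order within a block does not) with $\bigcup_i B_i=[n]$ that avoid $\rho$. *)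

From HB Require Import structures.
From mathcomp Require Import all_boot all_order all_algebra all_fingroup.
From mathcomp Require Import all_classical all_reals all_analysis.
Set Implicit Arguments. Unset Strict Implicit. Unset Printing Implicit Defensive.

(* [n] is modelled by 'I_n = {0,..,n-1} (order-isomorphic), blocks are
   indexed by 'I_k; a sequence B_1/.../B_k is a finite function
   'I_k -> {set 'I_n}. *)

Definition is_ordered_cover (n k : nat) (B : {ffun 'I_k -> {set 'I_n}}) : bool :=
  [forall i : 'I_k, forall j : 'I_k, (i != j) ==> [disjoint B i & B j]] &&
  (\bigcup_(i : 'I_k) B i == [set: 'I_n]).

Definition contains_perm (n k m : nat) (B : {ffun 'I_k -> {set 'I_n}})
    (rho : 'S_m) : bool :=
  [exists idx : {ffun 'I_m -> 'I_k}, exists b : {ffun 'I_m -> 'I_n},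
     [forall a : 'I_m, forall c : 'I_m, (a < c)%N ==> (idx a < idx c)%N] &&
     [forall a : 'I_m, b a \in B (idx a)] &&
     [forall a : 'I_m, forall c : 'I_m,
        ((b a < b c)%N == (rho a < rho c)%N)]].

Definition avoids_perm (n k m : nat) (B : {ffun 'I_k -> {set 'I_n}})
    (rho : 'S_m) : bool := ~~ contains_perm B rho.

Definition opstar (n k m : nat) (rho : 'S_m) : nat :=
  #|[set B : {ffun 'I_k -> {set 'I_n}} | is_ordered_cover B && avoids_perm B rho]|.

From HB Require Import structures.
From mathcomp Require Import all_boot all_order all_algebra all_fingroup.
From mathcomp Require Import all_classical all_reals all_analysis.
From mathcomp Require Import zify ring lra.
Import Order.TTheory GRing.Theory Num.Theory numFieldNormedType.Exports.
Set Implicit Arguments. Unset Strict Implicit. Unset Printing Implicit Defensive.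

(* With d = min(k, m-1), op*_{n,k}(rho)^(1/n) tends to d.

   Lower bound: colouring [n] with d colours and using the colour classes as
   the first d blocks gives d^n covers, all avoiding rho, because an
   occurrence of rho uses m distinct blocks.

   Upper bound: a cover is determined by its word of block indices, and an
   avoiding cover gives a word with no subsequence realizing rho.  The
   potential of a word is the number of words of length at most m over [k]
   occurring in it as subsequences; it is at most K, the number of such
   words.  Appending a letter either keeps the potential (a free letter) or
   increases it, and an avoiding word has fewer than m free letters, since
   any m of them can be arranged into an occurrence of rho.  So at most K
   positions carry non-free letters, which gives at most ((n+1)k)^K d^n
   avoiding words, and ((n+1)k)^(K/n) tends to 1. *)

Fixpoint words (k j : nat) : seq (seq nat) :=
  if j is j'.+1 then [seq c :: w | c <- iota 0 k, w <- words k j'] else [:: [::]].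

Lemma mem_words k j w : (w \in words k j) = (size w == j) && all (fun c => c < k) w.
Proof.
elim: j w => [|j IHj] w; first by case: w.
apply/allpairsP/idP => [[[c w'] /= [c_k w'_j ->]]|].
  by move: c_k w'_j; rewrite mem_iota IHj /= eqSS add0n => -> /andP[-> ->].
case: w => [|c w] //= /and3P[sz_w ck wk].
by exists (c, w); rewrite mem_iota IHj -eqSS sz_w ck wk.
Qed.

Definition short_words (k m : nat) : seq (seq nat) :=
  flatten [seq words k j | j <- iota 0 m.+1].

Lemma mem_short_words k m u :
  (u \in short_words k m) = (size u <= m) && all (fun c => c < k) u.
Proof.
apply/flattenP/andP => [[_ /mapP[j + ->]]|[sz_u uk]].
  by rewrite mem_iota mem_words ltnS => /andP[_ le_jm] /andP[/eqP-> ->].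
exists (words k (size u)); last by rewrite mem_words eqxx.
by apply: map_f; rewrite mem_iota ltnS.
Qed.

(* [u] is the word of blocks of an occurrence of [rho], listed in increasing order
   of the elements: the element of rank [rho a] lies in the [a]-th block used. *)
Definition realizes m (rho : 'S_m) (u : seq nat) : bool :=
  (size u == m) &&
  [forall a : 'I_m, forall c : 'I_m, (a < c) ==> (nth 0 u (rho a) < nth 0 u (rho c))].

Definition word_contains k m (rho : 'S_m) (x : seq nat) : bool :=
  has (fun u => realizes rho u && subseq u x) (short_words k m).

Lemma word_contains_cat k m (rho : 'S_m) x y :
  word_contains k rho x -> word_contains k rho (x ++ y).
Proof.
case/hasP=> u u_short /andP[u_rho u_x]; apply/hasP; exists u => //.
by rewrite u_rho (subseq_trans u_x) ?prefix_subseq.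
Qed.

Lemma word_contains_nil k m (rho : 'S_m) : 0 < m -> ~~ word_contains k rho [::].
Proof.
move=> m_gt0; apply/hasPn => u _; apply/negP => /andP[/andP[/eqP sz_u _]].
by rewrite subseq0 => /eqP u0; move: m_gt0; rewrite -sz_u u0.
Qed.

Lemma sub_count_lt (T : Type) (p q : pred T) (s : seq T) :
  subpred p q -> has (fun x => q x && ~~ p x) s -> count p s < count q s.
Proof.
move=> pq; elim: s => //= x s IHs /orP[/andP[-> /negbTE ->]|has_s].
  by rewrite add0n add1n ltnS sub_count.
by rewrite -addnS leq_add ?IHs //; case/boolP: (p x) => // /pq ->.
Qed.

Definition potential k m (x : seq nat) : nat := count (subseq^~ x) (short_words k m).

Definition free_letter k m (x : seq nat) (c : nat) : bool :=
  all (fun u => subseq u (rcons x c) ==> subseq u x) (short_words k m).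

Lemma potential_rcons_free k m x c :
  free_letter k m x c -> potential k m (rcons x c) = potential k m x.
Proof.
move=> /allP c_free; apply: eq_in_count => u /c_free /implyP u_x /=.
by apply/idP/idP => [//|/subseq_trans]; apply; apply: subseq_rcons.
Qed.

Lemma potential_rcons_nonfree k m x c :
  ~~ free_letter k m x c -> potential k m x < potential k m (rcons x c).
Proof.
move=> /allPn[u u_short]; rewrite negb_imply => u_new.
apply: sub_count_lt => [v /= /subseq_trans|]; first by apply; apply: subseq_rcons.
by apply/hasP; exists u.
Qed.

Lemma subseq_of_free_letters k m x v :
  size v <= m -> all (fun c => c < k) v -> all (free_letter k m x) v -> subseq v x.
Proof.
elim/last_ind: v => [|v c IHv]; first by rewrite sub0seq.
rewrite size_rcons !all_rcons => sz_v /andP[c_k v_k] /andP[/allP c_free v_free].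
have v_x : subseq v x by rewrite IHv ?(ltnW sz_v).
have vc_short : rcons v c \in short_words k m.
  by rewrite mem_short_words size_rcons sz_v all_rcons c_k.
by apply: (implyP (c_free _ vc_short)); rewrite -!cats1 cat_subseq.
Qed.

(* Sorting [m] free letters and placing them according to [rho] yields an
   occurrence of [rho], since every short word over free letters occurs in [x]. *)
Lemma count_free_letters k m (rho : 'S_m) x :
  ~~ word_contains k rho x -> count (free_letter k m x) (iota 0 k) < m.
Proof.
rewrite ltnNge; apply: contraNN => m_le.
set s := [seq c <- iota 0 k | free_letter k m x c].
have m_le_s : m <= size s by rewrite size_filter.
have s_sorted : sorted ltn s.
  by apply: sorted_filter; [apply: ltn_trans | apply: iota_ltn_sorted].
have s_free c : c \in s -> (c < k) && free_letter k m x c.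
  by rewrite mem_filter mem_iota andbC.
pose v : seq nat := [seq nth 0 s ((rho^-1)%g j) | j <- enum 'I_m].
have v_s : {subset v <= s}.
  by move=> _ /mapP[j _ ->]; rewrite mem_nth // (leq_trans _ m_le_s).
have sz_v : size v = m by rewrite size_map size_enum_ord.
have v_k : all (fun c => c < k) v by apply/allP => c /v_s /s_free /andP[].
have nth_v (a : 'I_m) : nth 0 v (rho a) = nth 0 s a.
  by rewrite (nth_map a) ?size_enum_ord // nth_ord_enum permK.
apply/hasP; exists v.
  by rewrite mem_short_words v_k andbT sz_v.
apply/andP; split.
  apply/andP; split; first exact/eqP.
  apply/forallP => a; apply/forallP => c; apply/implyP => lt_ac.
  by rewrite !nth_v (sorted_ltn_nth ltn_trans) // inE (leq_trans _ m_le_s).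
apply: (@subseq_of_free_letters k m) => //; first exact: eq_leq.
by apply/allP => c /v_s /s_free /andP[].
Qed.

Definition avoiding_extensions k m (rho : 'S_m) (x : seq nat) (n : nat) : nat :=
  count (fun y => ~~ word_contains k rho (x ++ y)) (words k n).

Lemma avoiding_extensionsS k m (rho : 'S_m) x n :
  avoiding_extensions k rho x n.+1 =
  \sum_(c <- iota 0 k) avoiding_extensions k rho (rcons x c) n.
Proof.
rewrite /avoiding_extensions /= count_flatten sumnE !big_map.
by apply: eq_bigr => c _; rewrite count_map; apply: eq_count => y; rewrite /= cat_rcons.
Qed.

Lemma avoiding_extensions_contains k m (rho : 'S_m) x n :
  word_contains k rho x -> avoiding_extensions k rho x n = 0.
Proof.
move=> x_contains; apply/eqP; rewrite -leqn0 leqNgt -has_count.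
by apply/hasPn => y _; rewrite /= word_contains_cat.
Qed.

Lemma free_nonfree_bound (d k F N A D j : nat) :
  0 < d -> F <= d -> N <= k -> (j = 0 -> N = 0) ->
  F * (A ^ j * D) + N * (A ^ j.-1 * D) <= (A + k) ^ j * (d * D).
Proof.
move=> d_gt0 F_d N_k; case: j => [/(_ erefl) -> | j _] /=.
  by rewrite mul0n addn0 !expn0 !mul1n leq_mul.
have A_Ak : A ^ j <= (A + k) ^ j.
  by elim: j => // j IHj; rewrite !expnS leq_mul ?leq_addr.
apply: (@leq_trans (d * (A * (A + k) ^ j * D) + k * ((A + k) ^ j * D))).
  by rewrite expnS leq_add ?leq_mul.
rewrite expnS; move: ((A + k) ^ j) => Q; nia.
Qed.

Section AvoidingWordsBound.

Variables (k m : nat) (rho : 'S_m).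
Hypotheses (k_gt0 : 0 < k) (m_gt1 : 1 < m).

Let d := minn k m.-1.
Let K := size (short_words k m).

Lemma avoiding_extensions_le n x :
  all (fun c => c < k) x -> ~~ word_contains k rho x ->
  avoiding_extensions k rho x n <= (n.+1 * k) ^ (K - potential k m x) * d ^ n.
Proof.
elim: n x => [|n IHn] x x_k x_avoids.
  by rewrite /avoiding_extensions /= cats0 x_avoids muln1 expn_gt0 mul1n k_gt0.
set j := K - potential k m x.
have letter_le c : c < k -> avoiding_extensions k rho (rcons x c) n <=
    (n.+1 * k) ^ (if free_letter k m x c then j else j.-1) * d ^ n.
  move=> c_k; have [xc_contains|xc_avoids] := boolP (word_contains k rho (rcons x c)).
    by rewrite avoiding_extensions_contains.
  apply: leq_trans (IHn _ _ xc_avoids) _; first by rewrite all_rcons c_k x_k.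
  rewrite leq_mul2r leq_pexp2l ?orbT ?muln_gt0 ?k_gt0 //.
  case: ifP => [/potential_rcons_free -> // | /negbT nonfree].
  by rewrite -subnS leq_sub2l ?potential_rcons_nonfree.
have d_gt0 : 0 < d by rewrite /d; lia.
have count_le_k (p : pred nat) : count p (iota 0 k) <= k.
  by rewrite -[leqRHS](size_iota 0) count_size.
have free_d : count (free_letter k m x) (iota 0 k) <= d.
  have := count_free_letters x_avoids; have := count_le_k (free_letter k m x).
  by rewrite /d; lia.
have nonfree0 : j = 0 -> count (predC (free_letter k m x)) (iota 0 k) = 0.
  move=> j0; apply/eqP; rewrite -leqn0 leqNgt -has_count; apply/hasP => -[c _ nonfree].
  have := leq_trans (potential_rcons_nonfree nonfree) (count_size _ _).
  by move: j0 => /eqP; rewrite subn_eq0 leqNgt => /negP.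
rewrite avoiding_extensionsS.
apply: (@leq_trans (\sum_(c <- iota 0 k)
    (n.+1 * k) ^ (if free_letter k m x c then j else j.-1) * d ^ n)).
  rewrite big_seq [leqRHS]big_seq; apply: leq_sum => c.
  by rewrite mem_iota => /andP[_ /letter_le].
rewrite (bigID (free_letter k m x)) /=.
rewrite (eq_bigr (fun=> (n.+1 * k) ^ j * d ^ n)) => [|c ->//].
rewrite [X in _ + X](eq_bigr (fun=> (n.+1 * k) ^ j.-1 * d ^ n)) => [|c /negbTE ->//].
rewrite !big_const_seq !iter_addn_0 [_ * count _ _]mulnC [_ * count _ _]mulnC.
rewrite [n.+2 * k]mulSnr expnS.
exact: free_nonfree_bound d_gt0 free_d (count_le_k _) nonfree0.
Qed.

End AvoidingWordsBound.

Section BlockWord.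

Variables n k : nat.
Implicit Type B : {ffun 'I_k -> {set 'I_n}}.

(* [0] if [x] lies in no block, which cannot happen for a cover. *)
Definition block_of B (x : 'I_n) : nat :=
  if [pick i | x \in B i] is Some i then val i else 0.

Definition block_word B : seq nat := [seq block_of B x | x <- enum 'I_n].

Lemma block_ofP B x i : is_ordered_cover B -> (x \in B i) = (block_of B x == i).
Proof.
case/andP=> /forallP disjB /eqP coverB.
have /bigcupP[j _ x_Bj] : x \in \bigcup_(j : 'I_k) B j by rewrite coverB inE.
rewrite /block_of; case: pickP => [l x_Bl|/(_ j)]; last by rewrite x_Bj.
apply/idP/eqP => [x_Bi|/val_inj <- //].
have [-> // | ne_il] := eqVneq i l.
by move: (forallP (disjB i) l); rewrite ne_il => /disjointFr/(_ x_Bi); rewrite x_Bl.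
Qed.

Lemma block_word_words B : 0 < k -> block_word B \in words k n.
Proof.
move=> k_gt0; rewrite mem_words size_map size_enum_ord eqxx /=.
apply/allP => _ /mapP[x _ ->]; rewrite /block_of.
by case: pickP => [i _|_] //; apply: ltn_ord.
Qed.

Lemma block_word_inj B B' : is_ordered_cover B -> is_ordered_cover B' ->
  block_word B = block_word B' -> B = B'.
Proof.
move=> coverB coverB' /eq_in_map eqBB'; apply/ffunP => i; apply/setP => x.
by rewrite (block_ofP _ _ coverB) (block_ofP _ _ coverB') eqBB' ?mem_enum.
Qed.

Lemma nth_block_word B (x : 'I_n) : nth 0 (block_word B) x = block_of B x.
Proof. by rewrite (nth_map x) ?size_enum_ord // nth_ord_enum. Qed.

End BlockWord.

Lemma subseq_nth (u w : seq nat) : subseq u w ->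
  exists q : nat -> nat,
    (forall i j, i < j -> j < size u -> q i < q j) /\
    (forall i, i < size u -> q i < size w /\ nth 0 w (q i) = nth 0 u i).
Proof.
elim: w u => [|y w IHw] [|x u] //=; try by exists id.
have [-> /IHw[q [q_incr q_nth]]|_ /IHw[q [q_incr q_nth]]] := eqVneq x y.
  exists (fun i => if i is i'.+1 then (q i').+1 else 0); split.
    by case=> [|i] [|j] //= lt_ij lt_j; rewrite ltnS q_incr.
  by case=> [|i] //= /q_nth[].
exists (fun i => (q i).+1); split; first by move=> i j lt_ij lt_j; rewrite ltnS q_incr.
by move=> i /q_nth[].
Qed.

Lemma block_word_contains n k m (rho : 'S_m) (B : {ffun 'I_k -> {set 'I_n}}) :
  is_ordered_cover B -> word_contains k rho (block_word B) -> contains_perm B rho.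
Proof.
move=> coverB /hasP[u u_short /andP[/andP[/eqP sz_u /forallP u_rho] u_sub]].
move: u_short; rewrite mem_short_words => /andP[_ /allP u_k].
have [q [q_incr q_nth]] := subseq_nth u_sub.
have sz_w : size (block_word B) = n by rewrite size_map size_enum_ord.
have rho_u (a : 'I_m) : rho a < size u by rewrite sz_u.
have u_lt (a : 'I_m) : nth 0 u (rho a) < k by rewrite u_k ?mem_nth.
have q_lt (a : 'I_m) : q (rho a) < n by rewrite -sz_w; case: (q_nth _ (rho_u a)).
have q_mono i j : i < m -> j < m -> (q i < q j) = (i < j).
  move=> lt_im lt_jm; case: (ltngtP i j) => [lt_ij|lt_ji|->]; last by rewrite !ltnn.
  - by rewrite q_incr ?sz_u.
  - by apply/negbTE; rewrite -leqNgt ltnW ?q_incr ?sz_u.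
apply/existsP; exists [ffun a => Ordinal (u_lt a)].
apply/existsP; exists [ffun a => Ordinal (q_lt a)].
apply/andP; split; [apply/andP; split|]; apply/forallP => a.
- apply/forallP => c; apply/implyP => lt_ac; rewrite !ffunE.
  exact: (implyP (forallP (u_rho a) c)).
- rewrite !ffunE (block_ofP _ _ coverB) -nth_block_word /=.
  by case: (q_nth _ (rho_u a)) => _ ->.
- by apply/forallP => c; rewrite !ffunE /= q_mono.
Qed.

Lemma opstar_le_avoiding_words n k m (rho : 'S_m) :
  0 < k -> opstar n k rho <= avoiding_extensions k rho [::] n.
Proof.
move=> k_gt0; rewrite /opstar /avoiding_extensions -size_filter cardE.
rewrite -(size_map (@block_word n k)) uniq_leq_size //.
  rewrite map_inj_in_uniq ?enum_uniq // => B B'; rewrite !mem_enum !inE.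
  by move=> /andP[coverB _] /andP[coverB' _]; apply: block_word_inj.
move=> w /mapP[B]; rewrite mem_enum inE => /andP[coverB B_avoids] ->.
rewrite mem_filter /= block_word_words // andbT.
by apply: contra B_avoids; apply: block_word_contains.
Qed.

Lemma increasing_ord_ge m (f : 'I_m -> nat) :
  (forall a c : 'I_m, a < c -> f a < f c) -> forall a : 'I_m, a <= f a.
Proof.
move=> f_incr; case=> a; elim: a => [//|a IHa] lt_am.
have lt_a1m := ltnW lt_am.
by apply: leq_ltn_trans (IHa lt_a1m) (f_incr (Ordinal lt_a1m) (Ordinal lt_am) _).
Qed.

Section CoverOfColoring.

Variables n k d : nat.
Hypothesis d_k : d <= k.

Definition cover_of_coloring (g : {ffun 'I_n -> 'I_d}) : {ffun 'I_k -> {set 'I_n}} :=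
  [ffun i : 'I_k => [set x | val (g x) == val i]].

Let colour (g : {ffun 'I_n -> 'I_d}) x : 'I_k := widen_ord d_k (g x).

Lemma cover_of_coloring_inj : injective cover_of_coloring.
Proof.
move=> g g' /ffunP eq_gg'; apply/ffunP => x; apply: val_inj.
by have /setP/(_ x) := eq_gg' (colour g x); rewrite !ffunE !inE eqxx => /esym/eqP.
Qed.

Lemma cover_of_coloring_cover g : is_ordered_cover (cover_of_coloring g).
Proof.
apply/andP; split.
  apply/forallP => i; apply/forallP => j; apply/implyP => ne_ij.
  rewrite -setI_eq0; apply/eqP/setP => x; rewrite !ffunE !inE.
  by apply: contraNF ne_ij => /andP[/eqP gi /eqP gj]; apply/eqP/val_inj; rewrite -gi -gj.
apply/eqP/setP => x; rewrite inE; apply/bigcupP.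
by exists (colour g x); rewrite ?ffunE ?inE.
Qed.

Lemma cover_of_coloring_avoids m (rho : 'S_m) g :
  d < m -> avoids_perm (cover_of_coloring g) rho.
Proof.
move=> lt_dm; apply/negP => /existsP[idx /existsP[b]].
case/andP=> /andP[/forallP idx_incr /forallP b_idx] _.
have lt_m1m : m.-1 < m by lia.
have idx_incr' (a c : 'I_m) : a < c -> idx a < idx c by apply/implyP/(forallP (idx_incr a)).
have := increasing_ord_ge idx_incr' (Ordinal lt_m1m).
have := b_idx (Ordinal lt_m1m); rewrite ffunE inE => /eqP <- /=.
by move=> /leq_ltn_trans/(_ (ltn_ord (g _))); lia.
Qed.

End CoverOfColoring.

Lemma opstar_ge n k m (rho : 'S_m) : 1 < m -> (minn k m.-1) ^ n <= opstar n k rho.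
Proof.
move=> m_gt1; set d := minn k m.-1.
have d_k : d <= k by rewrite geq_minl.
have lt_dm : d < m by rewrite /d; lia.
rewrite -{1}(card_ord d) -{1}(card_ord n) -card_ffun.
rewrite -(card_imset _ (cover_of_coloring_inj d_k)).
apply/subset_leq_card/fintype.subsetP => _ /imsetP[g _ ->].
rewrite inE; apply/andP; split.
  exact: cover_of_coloring_cover.
exact: cover_of_coloring_avoids.
Qed.

Lemma opstar_le n k m (rho : 'S_m) : 0 < k -> 1 < m ->
  opstar n k rho <= (n.+1 * k) ^ size (short_words k m) * (minn k m.-1) ^ n.
Proof.
move=> k_gt0 m_gt1; apply: leq_trans (opstar_le_avoiding_words n rho k_gt0) _.
have nil_avoids : ~~ word_contains k rho [::] by rewrite word_contains_nil // ltnW.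
apply: leq_trans (avoiding_extensions_le k_gt0 m_gt1 n (x := [::]) isT nil_avoids) _.
by rewrite leq_mul2r leq_pexp2l ?leq_subr ?muln_gt0 ?k_gt0 ?orbT.
Qed.

Local Open Scope ring_scope.
Local Open Scope classical_set_scope.

(* For [t >= 8P/e^2]: [(t+1)P <= 2tP <= (1 + te/2)^2 <= expR (te)]. *)
Lemma cvg_ln_div_n (R : realType) (P : nat) : (0 < P)%N ->
  (n%:R^-1 * ln ((n.+1 * P)%:R : R)) @[n --> \oo] --> (0 : R).
Proof.
move=> P_gt0; apply/cvgrPdist_le => e e_gt0.
have P_ge1 : 1 <= P%:R :> R by rewrite ler1n.
near=> n.
have t_large : 8 * P%:R / e ^+ 2 + 1 <= n%:R by near: n; apply: nbhs_infty_ger.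
set t : R := n%:R in t_large *.
have e2_gt0 : 0 < e ^+ 2 by rewrite exprn_gt0.
have t_ge1 : 1 <= t.
  have : 0 <= 8 * P%:R / e ^+ 2 by apply: divr_ge0; [lra | exact: ltW].
  lra.
have t_gt0 : 0 < t by apply: lt_le_trans t_ge1.
have Pt_small : 8 * P%:R <= t * e ^+ 2 by rewrite -ler_pdivrMr //; lra.
have nP_eq : (n.+1 * P)%:R = (t + 1) * P%:R :> R by rewrite natrM -addn1 natrD.
have nP_ge1 : 1 <= (n.+1 * P)%:R :> R by rewrite ler1n muln_gt0 P_gt0.
have nP_le : (t + 1) * P%:R <= expR (t * e).
  have -> : expR (t * e) = expR (t * e / 2) ^+ 2 by rewrite expr2 -expRD; congr expR; field.
  apply: (@le_trans _ _ ((1 + t * e / 2) ^+ 2)); last first.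
    by rewrite lerXn2r ?nnegrE ?expR_ge1Dx //; nra.
  have : t * (8 * P%:R) <= t * (t * e ^+ 2) by rewrite ler_pM2l.
  nra.
rewrite sub0r normrN ger0_norm ?mulr_ge0 ?invr_ge0 ?ler0n ?ln_ge0 //.
rewrite mulrC ler_pdivrMr // mulrC -(expRK (t * e)) ler_ln ?posrE ?expR_gt0 //.
  by rewrite nP_eq.
by apply: lt_le_trans nP_ge1.
Unshelve. all: end_near.
Qed.

Lemma cvg_root_poly (R : realType) (K P : nat) : (0 < P)%N ->
  (((n.+1 * P) ^ K)%:R `^ n%:R^-1) @[n --> \oo] --> (1 : R).
Proof.
move=> P_gt0.
have root_expR n : (((n.+1 * P) ^ K)%:R : R) `^ n%:R^-1 =
    expR (K%:R * (n%:R^-1 * ln ((n.+1 * P)%:R : R))).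
  rewrite /powR pnatr_eq0 expn_eq0 muln_eq0 (negbTE (lt0n_neq0 P_gt0)) /=.
  by rewrite natrX lnXn ?ltr0n ?muln_gt0 ?P_gt0 // -[ln _ *+ K]mulr_natl mulrCA.
under eq_fun do rewrite root_expR.
have exponent_cvg : (K%:R * (n%:R^-1 * ln ((n.+1 * P)%:R : R))) @[n --> \oo]
    --> (K%:R * 0 : R) by apply: cvgMl_tmp; exact: cvg_ln_div_n.
have := cvg_comp _ _ exponent_cvg (@continuous_expR R (K%:R * 0)).
by rewrite mulr0 expR0.
Qed.

Lemma powR_root (R : realType) (x : R) (n : nat) : 0 <= x -> (0 < n)%N ->
  (x ^+ n) `^ n%:R^-1 = x.
Proof.
by move=> x_ge0 n_gt0; rewrite -powR_mulrn // -powRrM mulfV ?powRr1 // pnatr_eq0 -lt0n.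
Qed.

Theorem theorem10 (R : realType) (k m : nat) (rho : 'S_m) :
  (0 < k)%N -> (2 <= m)%N ->
  exists L : R,
    (((opstar n k rho)%:R : R) `^ (n%:R^-1) @[n --> \oo] --> L)
    /\ 1 <= L.
Proof.
move=> k_gt0 m_gt1; set d := minn k m.-1; set K := size (short_words k m).
exists d%:R; split; last by rewrite ler1n /d; lia.
apply: (@squeeze_cvgr _ _ _ _ (fun=> d%:R)
  (fun n => d%:R * (((n.+1 * k) ^ K)%:R `^ n%:R^-1))); last 2 first.
- exact: cvg_cst.
- by rewrite -[X in _ --> X]mulr1; apply: cvgMl_tmp; apply: cvg_root_poly.
near=> n.
have n_gt0 : (0 < n)%N by near: n; apply: nbhs_infty_gt.
have [d_ge0 inv_n_ge0] : 0 <= d%:R :> R /\ 0 <= n%:R^-1 :> R by rewrite invr_ge0.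
rewrite -{1 2}(powR_root d_ge0 n_gt0) mulrC -powRM ?exprn_ge0 ?ler0n //.
rewrite !ge0_ler_powR ?nnegrE ?mulr_ge0 ?exprn_ge0 ?ler0n // -!natrX ?ler_nat.
  by rewrite -natrM ler_nat; apply: opstar_le.
exact: opstar_ge.
Unshelve. all: end_near.
Qed.
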